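(* Let $k$ be a field and let $\varphi$ be a cubic form on a finite-dimensional vector space $V$ over $k$. If there exists a simple field extension $K/k$ with $[K:k] = 4$ such that $\varphi_K$ is isotropic, then there exists a finite extension $L/k$ with $[L:k] \in \{1,5\}$ such that $\varphi_L$ is isotropic.
   Context: A cubic form is a homogeneous polynomial function of degree $3$. For a field extension $K/k$, $\varphi_K$ denotes the form on $V \otimes_k K$ with $\varphi_K(v \otimes w) = w^3 \varphi(v)$. A form is isotropic if it has a non-zero zero. *)

From HB Require Import structures.
From mathcomp Require Import all_boot all_order all_algebra all_field.
From mathcomp Require Import mpoly.
Set Implicit Arguments. Unset Strict Implicit. Unset Printing Implicit Defensive.
Import GRing.Theory.
Local Open Scope ring_scope.

(* A cubic form on V = k^n (V finite-dimensional, coordinates fixed):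
   a homogeneous polynomial of degree 3 in n variables. *)
Definition cubic_form (k : fieldType) (n : nat) (phi : {mpoly k[n]}) : Prop :=
  phi \is 3.-homog.

Definition base_change (k : fieldType) (n : nat) (K : fieldExtType k)
  (phi : {mpoly k[n]}) : {mpoly K[n]} := map_mpoly (in_alg K) phi.

Definition isotropic (R : fieldType) (n : nat) (p : {mpoly R[n]}) : Prop :=
  exists v : 'I_n -> R, (exists i, v i != 0) /\ p.@[v] = 0.

Definition simple_ext (k : fieldType) (K : fieldExtType k) : Prop :=
  exists x : K, (<<1; x>>%VS = fullv).

(* [K:k] is \dim {:K}, the dimension of K as a k-vector space. *)

(* Write K = k(x) and let m be the minimal polynomial of x, of degree 4. A zero
   of phi over K is a vector Q of polynomials with m | phi(Q), which may be taken
   with coprime entries of degree < 4; let D be their maximal degree. If phi(Q) has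
   degree < 3D, the leading coefficients of Q form a zero of phi over k. Otherwise
   phi(Q) = g m with deg g = 3D - 4 in {2, 5}, so g has an irreducible factor h of
   degree 1, 2 or 5, and Q is a nonzero zero of phi over k[t]/(h). In degree 2 the
   same argument with m := h leaves a linear cofactor, hence a zero over k. *)

From HB Require Import structures.
From mathcomp Require Import all_boot all_order all_algebra all_field.
From mathcomp Require Import mpoly.
From mathcomp Require Import zify.
From Stdlib Require Import Classical.
Set Implicit Arguments. Unset Strict Implicit. Unset Printing Implicit Defensive.
Import GRing.Theory.
Local Open Scope ring_scope.

Section MevalMorphism.
Variables (R S : comNzRingType) (n : nat).

Lemma rmorph_meval (f : {rmorphism R -> S}) (p : {mpoly R[n]}) (v : 'I_n -> R) :
  f p.@[v] = (map_mpoly f p).@[f \o v].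
Proof.
elim/mpolyind: p => [|c m p _ _ IH]; first by rewrite !(raddf0, meval0).
rewrite mevalD rmorphD IH raddfD /= mevalD map_mpolyZ map_mpolyX.
rewrite !mevalZ !mevalX rmorphM rmorph_prod; congr (_ * _ + _).
by apply: eq_bigr => i _; rewrite rmorphXn.
Qed.

Lemma map_mpoly_comp_eq (T : nzRingType) (f : {additive S -> T})
    (g : {additive R -> S}) (h : {additive R -> T}) :
  f \o g =1 h -> forall p : {mpoly R[n]}, map_mpoly f (map_mpoly g p) = map_mpoly h p.
Proof. by move=> fgh p; apply/mpolyP => m; rewrite !mcoeff_map_mpoly; apply: fgh. Qed.

Lemma map_mpoly_dhomog (f : {rmorphism R -> S}) d (p : {mpoly R[n]}) :
  injective f -> p \is d.-homog -> map_mpoly f p \is d.-homog.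
Proof.
move=> f_inj /dhomogP hp; apply/dhomogP => m.
by rewrite (perm_mem (msupp_map_mpoly _ f_inj)); apply: hp.
Qed.

End MevalMorphism.

Lemma meval_dhomog_scale (R : comNzRingType) n d (p : {mpoly R[n]}) c v :
  p \is d.-homog -> p.@[fun i => c * v i] = c ^+ d * p.@[v].
Proof.
move=> /dhomogP hp; rewrite !mevalE mulr_sumr; apply: eq_big_seq => m /hp <-.
rewrite mulrCA; congr (_ * _).
rewrite (_ : c ^+ _ = c ^+ (\sum_i m i)%N); last by rewrite -mdegE.
rewrite -prodrXr -big_split /=.
by apply: eq_bigr => i _; rewrite exprMn.
Qed.

Section PolynomialEvaluation.
Variable R : comNzRingType.
Implicit Types p q : {poly R}.

Lemma coefM_top p q a b : (size p <= a.+1)%N -> (size q <= b.+1)%N ->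
  (size (p * q)%R <= (a + b).+1)%N /\ (p * q)`_(a + b) = p`_a * q`_b.
Proof.
move=> sp sq; split; first by apply: leq_trans (size_polyMleq p q) _; lia.
have ha : (a < (a + b).+1)%N by rewrite ltnS leq_addr.
rewrite coefM (bigD1 (Ordinal ha)) //= addKn big1 ?addr0 // => -[j hj] /= hne.
have [ltja|ltaj|eja] := ltngtP j a.
- by rewrite [q`__]nth_default ?mulr0 //; apply: leq_trans sq _; lia.
- by rewrite nth_default ?mul0r //; apply: leq_trans sp _.
- by move: hne; rewrite -val_eqE /= eja eqxx.
Qed.

Lemma coefXn_top p D m : (size p <= D.+1)%N ->
  (size (p ^+ m) <= (m * D).+1)%N /\ (p ^+ m)`_(m * D) = p`_D ^+ m.
Proof.
move=> sp; elim: m => [|m [IHs IHc]]; first by rewrite !expr0 mul0n size_poly1 coefC.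
have [sM cM] := coefM_top sp IHs.
by rewrite exprS mulSn; split => //; rewrite cM IHc exprS.
Qed.

Lemma coef_prod_top (I : Type) (r : seq I) (F : I -> {poly R}) (d : I -> nat) :
  (forall i, size (F i) <= (d i).+1)%N ->
  (size (\prod_(i <- r) F i)%R <= (\sum_(i <- r) d i).+1)%N /\
  (\prod_(i <- r) F i)`_(\sum_(i <- r) d i) = \prod_(i <- r) (F i)`_(d i).
Proof.
move=> sF; elim: r => [|i r [IHs IHc]]; first by rewrite !big_nil size_poly1 coefC.
have [sM cM] := coefM_top (sF i) IHs.
by rewrite !big_cons; split => //; rewrite cM IHc.
Qed.

Definition meval_poly n (p : {mpoly R[n]}) (Q : 'I_n -> {poly R}) : {poly R} :=
  (map_mpoly polyC p).@[Q].

Lemma meval_poly_top n d (p : {mpoly R[n]}) (Q : 'I_n -> {poly R}) D :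
  p \is d.-homog -> (forall i, size (Q i) <= D.+1)%N ->
  (size (meval_poly p Q) <= (d * D).+1)%N /\
  (meval_poly p Q)`_(d * D) = p.@[fun i => (Q i)`_D].
Proof.
move=> /dhomogP hp sQ.
rewrite /meval_poly mevalE (perm_big _ (msupp_map_mpoly _ (@polyC_inj R))) mevalE.
have term m : m \in msupp p ->
  (size ((map_mpoly polyC p)@_m * \prod_i Q i ^+ m i)%R <= (d * D).+1)%N /\
  ((map_mpoly polyC p)@_m * \prod_i Q i ^+ m i)`_(d * D) =
     p@_m * \prod_i (Q i)`_D ^+ m i.
  move=> /hp hm; rewrite mcoeff_map_mpoly mul_polyC coefZ.
  have [] := coef_prod_top (index_enum 'I_n) (fun i => (coefXn_top (m i) (sQ i)).1).
  rewrite -big_distrl /= -mdegE hm => sP cP; split.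
    exact: leq_trans (size_scale_leq _ _) sP.
  by rewrite cP; congr (_ * _); apply: eq_bigr => i _; rewrite (coefXn_top _ (sQ i)).2.
split; last by rewrite coef_sum; apply: eq_big_seq => m /term[].
rewrite big_seq; elim/big_rec: _ => [|m q /term[sm _] IH]; first by rewrite size_poly0.
by apply: leq_trans (size_polyD _ _) _; rewrite geq_max IH sm.
Qed.

Lemma meval_poly_dhomog_scale n d (p : {mpoly R[n]}) (c : {poly R}) Q :
  p \is d.-homog -> meval_poly p (fun i => c * Q i) = c ^+ d * meval_poly p Q.
Proof. by move=> hp; apply/meval_dhomog_scale/map_mpoly_dhomog => //; apply: polyC_inj. Qed.

End PolynomialEvaluation.

Section ResidueField.
Variables (k : fieldType) (h : {poly k}) (hI : monic_irreducible_poly h).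

Lemma in_qpoly_eq0 p : (in_qpoly h p == 0) = (h %| p).
Proof.
by rewrite Pdiv.Field.dvdpE /Pdiv.CommonRing.rdvdp -(inj_eq val_inj) /= mk_monicE.
Qed.

Lemma in_qpoly_modp p : in_qpoly h (p %% h) = in_qpoly h p.
Proof.
apply/eqP; rewrite -subr_eq0 -rmorphB in_qpoly_eq0.
by rewrite {2}(divp_eq p h) opprD addrCA subrr addr0 dvdpNr dvdp_mull.
Qed.

Lemma dim_qfpoly : \dim {: {poly %/ h with hI}} = (size h).-1.
Proof. by rewrite /qfpoly /qpoly dim_polyn mk_monicE. Qed.

End ResidueField.

Lemma minPoly_base (k : fieldType) (K : fieldExtType k) (x : K) :
  exists2 m : {poly k}, monic_irreducible_poly m & map_poly (in_alg K) m = minPoly 1 x.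
Proof.
have /polyOver1P [m em] := minPolyOver 1 x; exists m => //; split; last first.
  by rewrite -(map_monic (in_alg K)) -em monic_minPoly.
split; first by rewrite -(size_map_poly (in_alg K)) -em size_minPoly.
move=> q sq qm.
have q1 : map_poly (in_alg K) q \is a polyOver 1%VS by apply/polyOver1P; exists q.
have : map_poly (in_alg K) q %| minPoly 1 x by rewrite em dvdp_map.
move/(minPoly_irr q1)/orP => -[]; first by rewrite em eqp_map.
by rewrite -(rmorph1 (map_poly (in_alg K))) eqp_map -size_poly_eq1 (negbTE sq).
Qed.

Lemma monic_irreducible_eqp (k : fieldType) (p : {poly k}) :
  irreducible_poly p -> exists2 h, monic_irreducible_poly h & h %= p.
Proof.
move=> [sp ip]; have p0 : p != 0 by rewrite -size_poly_gt0 ltnW.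
have lc0 : (lead_coef p)^-1 != 0 by rewrite invr_eq0 lead_coef_eq0.
exists ((lead_coef p)^-1 *: p); last exact: eqp_scale.
split; last by rewrite monicE lead_coefZ mulVf ?lead_coef_eq0.
split; first by rewrite size_scale.
by move=> q sq; rewrite dvdpZr // => /(ip q sq) /eqp_trans; apply; rewrite eqp_sym eqp_scale.
Qed.

Lemma irreducible_factor (k : fieldType) (g : {poly k}) : (1 < size g)%N ->
  exists2 h, monic_irreducible_poly h & h %| g /\
    (size h = size g \/ (2 * (size h).-1 <= (size g).-1)%N).
Proof.
elim: {g}(size g) {-2}g (leqnn (size g)) => [|N IH] g sgN sg1; first by move: sgN; lia.
have g0 : g != 0 by rewrite -size_poly_gt0 ltnW.
have [g_irr|g_red] := classic (irreducible_poly g).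
  have [h hI hg] := monic_irreducible_eqp g_irr.
  by exists h => //; split; [rewrite (eqp_dvdl _ hg) | left; apply: eqp_size].
have [d [sd1 dg d_ng]] : exists d : {poly k}, [/\ size d != 1%N, d %| g & ~~ (d %= g)].
  apply: NNPP => no_d; apply: g_red; split => // q sq qg.
  by apply: contraT => nqg; case: no_d; exists q.
have [e ge] : exists e, g = e * d by exists (g %/ d); rewrite divpK.
have [e0 d0] : e != 0 /\ d != 0 by apply/norP; rewrite -mulf_eq0 -ge.
have sg : size g = (size e + size d).-1 by rewrite ge size_mul.
have sd_lt : (size d < size g)%N by rewrite ltn_neqAle (dvdp_size_eqp dg) d_ng dvdp_leq.
have := size_poly_gt0 d; have := size_poly_gt0 e; rewrite d0 e0 => se0 sd0.
have [f [fg sf1 sf_lt sf_half]] : exists f : {poly k}, [/\ f %| g, (1 < size f)%N,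
    (size f < size g)%N & (2 * (size f).-1 <= (size g).-1)%N].
  have [sde|sed] := leqP (size d) (size e).
  - by exists d; split => //; lia.
  - by exists e; split; [rewrite ge dvdp_mulr | lia..].
have [h hI [hf sh]] := IH f (ltac:(lia)) sf1.
exists h => //; split; first exact: dvdp_trans hf fg.
by right; case: sh; lia.
Qed.

Section IsotropyDescent.
Variables (k : fieldType) (n : nat) (phi : {mpoly k[n]}).
Hypothesis phi_cubic : cubic_form phi.

Definition isotropic_deg (d : nat) :=
  exists L : fieldExtType k, \dim {:L} = d /\ isotropic (base_change L phi).

(* Isotropy of phi over k[t]/(m), with the zero represented by polynomials. *)
Definition isotropic_mod (m : {poly k}) :=
  exists Q : 'I_n -> {poly k}, (exists i, ~~ (m %| Q i)) /\ m %| meval_poly phi Q.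

Definition coprime_entries (Q : 'I_n -> {poly k}) :=
  forall h : {poly k}, (1 < size h)%N -> exists i, ~~ (h %| Q i).

Definition maxdeg (Q : 'I_n -> {poly k}) := (\max_i size (Q i)).-1.

Lemma size_maxdeg (Q : 'I_n -> {poly k}) i : (size (Q i) <= (maxdeg Q).+1)%N.
Proof. exact: leq_trans (leq_bigmax i) (leqSpred _). Qed.

Lemma isotropic_deg1 : isotropic phi -> isotropic_deg 1.
Proof.
move=> [v [[i vi0] phi_v]]; exists k^o; split; first exact: dimvf.
exists (in_alg k^o \o v); split.
  by exists i; rewrite /= scaler_eq0 oner_eq0 orbF.
by rewrite /base_change -(rmorph_meval (in_alg k^o)) phi_v rmorph0.
Qed.

Section ResidueIsotropy.
Variables (h : {poly k}) (hI : monic_irreducible_poly h).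

Lemma in_qpoly_meval_poly Q :
  in_qpoly h (meval_poly phi Q) =
  (base_change {poly %/ h with hI} phi).@[in_qpoly h \o Q].
Proof.
pose f : {rmorphism {poly k} -> {poly %/ h with hI}} := in_qpoly h.
rewrite -[in_qpoly h _]/(f _) /meval_poly rmorph_meval (map_mpoly_comp_eq (h := in_alg _)) //.
by move=> c; rewrite /= -alg_polyC in_qpolyZ in_qpoly1.
Qed.

Lemma isotropic_mod_deg : isotropic_mod h -> isotropic_deg (size h).-1.
Proof.
move=> [Q [[i hQi] h_phiQ]]; exists {poly %/ h with hI}; split; first exact: dim_qfpoly.
exists (in_qpoly h \o Q); split; first by exists i; rewrite /= in_qpoly_eq0.
by rewrite -in_qpoly_meval_poly; apply/eqP; rewrite in_qpoly_eq0.
Qed.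

Lemma isotropic_mod_small : isotropic_mod h ->
  exists Q : 'I_n -> {poly k}, [/\ forall i, (size (Q i) < size h)%N, (exists i, Q i != 0)
              & h %| meval_poly phi Q].
Proof.
move=> [Q [[i hQi] h_phiQ]]; have h0 : h != 0 by rewrite monic_neq0 //; case: hI.
exists (fun j => Q j %% h); split; first by move=> j; rewrite ltn_modp.
  by exists i; apply: contra hQi => /eqP/modp_eq0P.
rewrite -(in_qpoly_eq0 hI) in_qpoly_meval_poly.
rewrite (meval_eq _ (fun j => in_qpoly_modp hI (Q j))) -in_qpoly_meval_poly.
by rewrite in_qpoly_eq0.
Qed.

End ResidueIsotropy.

Lemma coprime_entries_decomposition (R : 'I_n -> {poly k}) i0 : R i0 != 0 ->
  exists c (Q : 'I_n -> {poly k}), [/\ c != 0, forall i, R i = c * Q i,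
    forall i, (size (Q i) <= size (R i))%N & coprime_entries Q].
Proof.
move=> R0; set c := \big[@gcdp k/0]_(i <- enum 'I_n) R i.
have cR i : c %| R i.
  have : i \in enum 'I_n by rewrite mem_enum.
  rewrite /c; elim: (enum 'I_n) => // j s IH; rewrite inE big_cons.
  case/predU1P => [-> | /IH]; first exact: dvdp_gcdl.
  exact: dvdp_trans (dvdp_gcdr _ _).
have dvdp_c d : (forall i, d %| R i) -> d %| c.
  by move=> dR; rewrite /c; elim/big_ind: _ => [|x y|i _]; rewrite ?dvdp0 ?dvdp_gcd => // -> ->.
have c0 : c != 0 by apply: contraNneq R0 => c0; rewrite -dvd0p -c0 cR.
exists c, (fun i => R i %/ c); split => // [i|i|h sh]; first by rewrite mulrC divpK.
  exact: leq_divp.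
apply/existsP; apply: contraT; rewrite negb_exists => /forallP hQ.
have h0 : h != 0 by rewrite -size_poly_gt0 ltnW.
have : h * c %| c.
  by apply: dvdp_c => i; rewrite -(divpK (cR i)) dvdp_mul2r // -[_ %| _]negbK hQ.
move/(dvdp_leq c0); rewrite size_mul //.
by move: sh (size_poly_gt0 c); rewrite c0; move: (size h) (size c) => a b; lia.
Qed.

Lemma meval_poly_exact_size Q : coprime_entries Q ->
  isotropic_deg 1 \/ size (meval_poly phi Q) = (3 * maxdeg Q).+1.
Proof.
move=> Qcop; have [sP cP] := meval_poly_top phi_cubic (size_maxdeg Q).
have [phi_lead0|phi_lead] := eqVneq phi.@[fun i => (Q i)`_(maxdeg Q)] 0; last first.
  right; apply/eqP; rewrite eqn_leq sP ltnNge.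
  by apply: contra phi_lead; rewrite -cP => /(nth_default 0) ->.
left; apply: isotropic_deg1; exists (fun i => (Q i)`_(maxdeg Q)); split => //.
have [i0 i0X] := Qcop 'X (ltac:(by rewrite size_polyX)).
have I_n_gt0 : (0 < #|'I_n|)%N by apply/card_gt0P; exists i0.
have [i imax] := eq_bigmax (fun i => size (Q i)) I_n_gt0.
have Qi0 : Q i0 != 0 by apply: contraNneq i0X => ->; apply: dvdp0.
exists i; rewrite /maxdeg imax -lead_coefE lead_coef_eq0 -size_poly_gt0.
by rewrite -imax (leq_trans _ (leq_bigmax i0)) // size_poly_gt0.
Qed.

Lemma cofactor_descent m : monic_irreducible_poly m -> isotropic_mod m ->
  isotropic_deg 1 \/ exists D (g : {poly k}), [/\ (D < (size m).-1)%N, g != 0,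
    (size g + (size m).-1 = (3 * D).+1)%N
    & forall h : {poly k}, (1 < size h)%N -> h %| g -> isotropic_mod h].
Proof.
move=> mI /(isotropic_mod_small mI) [R [sR [i0 Ri0] m_phiR]].
have [c [Q [c0 RcQ sQ Qcop]]] := coprime_entries_decomposition Ri0.
have m_c3 : coprimep m (c ^+ 3).
  apply/coprimep_expr; rewrite irreducible_poly_coprime; last by case: mI.
  have c_Ri0 : c %| R i0 by rewrite RcQ dvdp_mulr.
  apply/negP => /(dvdp_leq c0); have := dvdp_leq Ri0 c_Ri0; have := sR i0.
  by move: (size c) (size m) (size (R i0)) => a b d; lia.
have m_phiQ : m %| meval_poly phi Q.
  by rewrite -(Gauss_dvdpr _ m_c3) -meval_poly_dhomog_scale // /meval_poly -(meval_eq _ RcQ).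
have [iso1|sP] := meval_poly_exact_size Qcop; [by left | right].
have [g Pg] : exists g, meval_poly phi Q = g * m by exists (meval_poly phi Q %/ m); rewrite divpK.
have [g0 m0] : g != 0 /\ m != 0 by apply/norP; rewrite -mulf_eq0 -Pg -size_poly_eq0 sP.
exists (maxdeg Q), g; split => //.
- have : (\max_i size (Q i) <= (size m).-1)%N.
    apply/bigmax_leqP => i _; have := leq_ltn_trans (sQ i) (sR i).
    by move: (size (Q i)) (size m) => a b; lia.
  by rewrite /maxdeg; case: mI => -[sm _] _; move: (\max_i _) (size m) sm => a b; lia.
- have := size_mul g0 m0; rewrite -Pg sP; have := size_poly_gt0 m; rewrite m0.
  by move: (size g) (size m) (maxdeg Q) => a b d; lia.
- by move=> h sh hg; exists Q; split; [exact: Qcop | rewrite Pg dvdp_mulr].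
Qed.

Lemma isotropic_mod_quadratic h : monic_irreducible_poly h -> size h = 3%N ->
  isotropic_mod h -> isotropic_deg 1.
Proof.
move=> hI sh /(cofactor_descent hI) [//|[D [g [ltD g0 sg g_iso]]]].
rewrite sh in ltD sg.
have sg2 : size g = 2%N by have := size_poly_gt0 g; rewrite g0; lia.
have [l lI [lg _]] := irreducible_factor (ltac:(by rewrite sg2) : (1 < size g)%N).
have [[sl1 _] _] := lI.
have sl : size l = 2%N by have := dvdp_leq g0 lg; rewrite sg2; lia.
by have := isotropic_mod_deg lI (g_iso l sl1 lg); rewrite sl.
Qed.

Lemma isotropic_mod_quartic m : monic_irreducible_poly m -> size m = 5%N ->
  isotropic_mod m -> isotropic_deg 1 \/ isotropic_deg 5.
Proof.
move=> mI sm /(cofactor_descent mI) [iso1|[D [g [ltD g0 sg g_iso]]]]; first by left.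
rewrite sm in ltD sg.
have sg1 : (1 < size g)%N by have := size_poly_gt0 g; rewrite g0; lia.
have [h hI [hg sh]] := irreducible_factor sg1.
have [[sh1 _] _] := hI.
have h_iso := g_iso h sh1 hg.
have : size h = 2%N \/ size h = 3%N \/ size h = 6%N by lia.
case=> [s2|[s3|s6]].
- by left; have := isotropic_mod_deg hI h_iso; rewrite s2.
- by left; apply: isotropic_mod_quadratic hI s3 h_iso.
- by right; have := isotropic_mod_deg hI h_iso; rewrite s6.
Qed.

Lemma isotropic_mod_simple_ext (K : fieldExtType k) (x : K) :
  <<1; x>>%VS = fullv -> isotropic (base_change K phi) ->
  exists2 m, monic_irreducible_poly m & size m = (\dim {:K}).+1 /\ isotropic_mod m.
Proof.
move=> Kx [v [[i0 vi0] phi_v]]; have [m mI em] := minPoly_base x.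
pose f : {rmorphism {poly k} -> K} := horner_alg x.
have f_eq0 p : (f p == 0) = (m %| p).
  apply/eqP/idP => [fp0 | /dvdpP[q ->]].
    rewrite -(dvdp_map (in_alg K)) em minPoly_dvdp //; last exact/rootP.
    by apply/polyOver1P; exists p.
  by rewrite rmorphM /= /horner_alg /horner_morph em minPolyxx mulr0.
have /fin_all_exists [P fP] : forall i, exists p : {poly k}, f p = v i.
  move=> i; have /polyOver1P [p ep] := Fadjoin_polyOver 1 x (v i).
  by exists p; rewrite /= /horner_alg /horner_morph -ep Fadjoin_poly_eq // Kx memvf.
exists m => //; split.
  by rewrite -(size_map_poly (in_alg K)) em size_minPoly -Kx dim_Fadjoin dimv1 muln1.
exists P; split; first by exists i0; rewrite -f_eq0 fP.
rewrite -f_eq0 /meval_poly rmorph_meval (map_mpoly_comp_eq (h := in_alg K) (horner_algC x)).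
by rewrite (meval_eq _ fP) phi_v.
Qed.

End IsotropyDescent.

Theorem theorem3p8 (k : fieldType) (n : nat) (phi : {mpoly k[n]}) :
  cubic_form phi ->
  (exists K : fieldExtType k,
      simple_ext K /\ \dim (fullv : {vspace K}) = 4%N /\ isotropic (base_change K phi)) ->
  exists L : fieldExtType k,
    (\dim (fullv : {vspace L}) = 1%N \/ \dim (fullv : {vspace L}) = 5%N) /\
    isotropic (base_change L phi).
Proof.
move=> phi_cubic [K [[x Kx] [dimK phiK_iso]]].
have [m mI [sm phi_mod_m]] := isotropic_mod_simple_ext Kx phiK_iso.
rewrite dimK in sm.
have [|] := isotropic_mod_quartic phi_cubic mI sm phi_mod_m => -[L [dimL phiL_iso]].
- by exists L; split; first left.
- by exists L; split; first right.
Qed.
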